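(* Let $G$ be a finite connected graph with $\operatorname{diam}(G)\ge 2\operatorname{rad}(G)-1$. Then for any diametral pair of vertices $x,y$ (i.e. $d(x,y)=\operatorname{diam}(G)$), the set $\{x,y\}$ is a minimum radius certificate of $G$. Furthermore, $\operatorname{rad}(G)=\lfloor\frac{d(x,y)+1}{2}\rfloor$.
   Context: $d$ shortest-path distance, $e(v)=\max_u d(v,u)$, $\operatorname{rad}(G)=\min_v e(v)$, $\operatorname{diam}(G)=\max_v e(v)$. A radius certificate is a set $L$ of vertices such that every vertex $u$ has some $z\in L$ with $d(u,z)\ge\operatorname{rad}(G)$; a minimum one is one of smallest cardinality. *)

From mathcomp Require Import all_boot.
Set Implicit Arguments. Unset Strict Implicit. Unset Printing Implicit Defensive.

Definition simple_graph (T : finType) (e : rel T) : Prop :=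
  symmetric e /\ irreflexive e.

Definition walkb (T : finType) (e : rel T) (n : nat) (u v : T) : bool :=
  [exists p : n.-tuple T, path e u p && (last u p == v)].

Definition connected_graph (T : finType) (e : rel T) : Prop :=
  (exists x : T, True) /\ forall u v : T, exists n, walkb e n u v.

(* shortest-path distance: least number of edges of a walk from u to v
   (searched among 0..#|T|-1, which suffices in a connected graph) *)
Definition dist (T : finType) (e : rel T) (u v : T) : nat :=
  find (fun n => walkb e n u v) (iota 0 #|T|).

Definition ecc (T : finType) (e : rel T) (v : T) : nat :=
  \max_(u : T) dist e v u.

(* radius: min of eccentricities (#|T| is a neutral upper bound, since all
   eccentricities are < #|T| in a connected graph) *)
Definition rad (T : finType) (e : rel T) : nat :=
  \big[minn/#|T|]_(v : T) ecc e v.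

Definition diam (T : finType) (e : rel T) : nat :=
  \max_(v : T) ecc e v.

Definition radius_certificate (T : finType) (e : rel T) (L : {set T}) : Prop :=
  forall u : T, exists2 z, z \in L & rad e <= dist e u z.

Definition min_radius_certificate (T : finType) (e : rel T) (L : {set T}) : Prop :=
  radius_certificate e L /\
  forall L' : {set T}, radius_certificate e L' -> #|L| <= #|L'|.

(** The triangle inequality through a center [c] gives [d(x,y) <= 2 rad], so
    with [2 rad - 1 <= diam = d(x,y)] the radius is [floor((d(x,y)+1)/2)].
    For every vertex [u], [d(u,x) + d(u,y) >= d(x,y) >= 2 rad - 1], hence one
    of [x], [y] is at distance at least [rad] from [u]: [{x, y}] is a radius
    certificate.  It is minimum because a certificate is nonempty and, when
    [rad > 0] (i.e. [x <> y]), a vertex [z] of it needs a witness [z'] with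
    [d(z,z') >= rad > 0], so that [z' <> z]. *)

From mathcomp Require Import all_boot.
From mathcomp Require Import zify.

Set Implicit Arguments.
Unset Strict Implicit.
Unset Printing Implicit Defensive.

Section Distance.
Variables (T : finType) (e : rel T).

Lemma dist_leq_card u v : dist e u v <= #|T|.
Proof. by rewrite /dist -[leqRHS](size_iota 0 #|T|) find_size. Qed.

Lemma walkb_dist u v : dist e u v < #|T| -> walkb e (dist e u v) u v.
Proof.
move=> lt_d; have has_walk : has (fun n => walkb e n u v) (iota 0 #|T|).
  by rewrite has_find size_iota.
by have := nth_find 0 has_walk; rewrite nth_iota.
Qed.

Lemma dist_leq_walkb n u v : walkb e n u v -> n < #|T| -> dist e u v <= n.
Proof.
move=> walk_n lt_n; rewrite leqNgt; apply/negP => /(before_find 0).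
by rewrite nth_iota // add0n walk_n.
Qed.

Lemma walkb_cat m n u c v :
  walkb e m u c -> walkb e n c v -> walkb e (m + n) u v.
Proof.
move=> /existsP[p /andP[pP /eqP pL]] /existsP[q /andP[qP /eqP qL]].
apply/existsP; exists [tuple of p ++ q].
by rewrite cat_path last_cat pL pP qP qL eqxx.
Qed.

Lemma dist_xx u : dist e u u = 0.
Proof.
rewrite /dist; case: #|T| (max_card (pred1 u)) => [|n]; first by rewrite card1.
by move=> _ /=; rewrite ifT //; apply/existsP; exists [tuple]; rewrite /= eqxx.
Qed.

Lemma dist_eq0 u v : dist e u v = 0 -> u = v.
Proof.
have card_gt0 : 0 < #|T| by apply/card_gt0P; exists u.
move=> d0; have /existsP[p /andP[_ /eqP]] : walkb e 0 u v.
  by rewrite -d0; apply: walkb_dist; rewrite d0.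
by rewrite (tuple0 p).
Qed.

Lemma dist_triangle u c v : dist e u v <= dist e u c + dist e c v.
Proof.
(* [dist] saturates at [#|T|], so only the case where all three distances
   are realised by walks needs an argument. *)
have [le_uc|lt_uc] := leqP #|T| (dist e u c).
  exact: leq_trans (dist_leq_card u v) (leq_trans le_uc (leq_addr _ _)).
have [le_cv|lt_cv] := leqP #|T| (dist e c v).
  exact: leq_trans (dist_leq_card u v) (leq_trans le_cv (leq_addl _ _)).
have [le_sum|lt_sum] := leqP #|T| (dist e u c + dist e c v).
  exact: leq_trans (dist_leq_card u v) le_sum.
by apply: dist_leq_walkb lt_sum; apply: walkb_cat; apply: walkb_dist.
Qed.

Hypothesis e_sym : symmetric e.

Lemma walkb_sym n u v : walkb e n u v -> walkb e n v u.
Proof.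
move=> /existsP[p /andP[pP /eqP pL]].
have size_rp : size (rev (belast u p)) == n.
  by rewrite size_rev size_belast size_tuple.
apply/existsP; exists (Tuple size_rp) => /=; apply/andP; split.
  by rewrite -pL rev_path; apply: sub_path pP => a b; rewrite e_sym.
have rev_up : rcons (rev p) u = v :: rev (belast u p).
  by rewrite -rev_cons lastI rev_rcons pL.
by rewrite -[last _ _]/(last v (v :: rev (belast u p))) -rev_up last_rcons.
Qed.

Lemma distC u v : dist e u v = dist e v u.
Proof. by apply: eq_find => n; apply/idP/idP; apply: walkb_sym. Qed.

End Distance.

Section Radius.
Variables (T : finType) (e : rel T).

Lemma dist_leq_ecc c u : dist e c u <= ecc e c.
Proof. exact: (@leq_bigmax T (fun u => dist e c u)). Qed.

Lemma ecc_leq_card c : ecc e c <= #|T|.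
Proof. by apply/bigmax_leqP => u _; apply: dist_leq_card. Qed.

Lemma rad_leq_card : rad e <= #|T|.
Proof.
apply: (big_ind (fun m => m <= #|T|)) => // [a b le_a _|c _]; last exact: ecc_leq_card.
by rewrite geq_min le_a.
Qed.

Lemma exists_ecc_leq_rad : 0 < #|T| -> exists c, ecc e c <= rad e.
Proof.
move=> /card_gt0P[w _].
apply: (big_ind (fun m => exists c, ecc e c <= m)) => [|a b Ha Hb|c _].
- by exists w; apply: ecc_leq_card.
- by rewrite /minn; case: ifP.
- by exists c.
Qed.

Lemma radius_certificate_card_gt0 L :
  0 < #|T| -> radius_certificate e L -> 0 < #|L|.
Proof. by move=> /card_gt0P[u _] /(_ u)[z Lz _]; apply/card_gt0P; exists z. Qed.

Lemma radius_certificate_card_gt1 L :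
  0 < rad e -> radius_certificate e L -> 1 < #|L|.
Proof.
move=> rad_pos certL.
have /card_gt0P[u _] := leq_trans rad_pos rad_leq_card.
have [z Lz _] := certL u.
have [z' Lz' far_zz'] := certL z.
apply/card_gt1P; exists z, z'; split=> //; apply: contraTneq far_zz' => <-.
by rewrite dist_xx -ltnNge.
Qed.

Hypothesis e_sym : symmetric e.

Lemma dist_leq_double_rad u v : dist e u v <= 2 * rad e.
Proof.
have [c ecc_c] : exists c, ecc e c <= rad e.
  by apply: exists_ecc_leq_rad; apply/card_gt0P; exists u.
apply: leq_trans (dist_triangle e u c v) _; rewrite (distC e_sym u c) mul2n -addnn.
by rewrite leq_add // (leq_trans (dist_leq_ecc _ _)).
Qed.

Lemma rad_gt0 (u v : T) : u != v -> 0 < rad e.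
Proof.
move=> neq_uv; have := dist_leq_double_rad u v.
have : dist e u v != 0 by apply: contra neq_uv => /eqP/dist_eq0->.
lia.
Qed.

Lemma far_pair_radius_certificate x y :
  2 * rad e - 1 <= dist e x y -> radius_certificate e [set x; y].
Proof.
move=> far_xy u; have := dist_triangle e x u y; rewrite (distC e_sym x u) => tri.
have [le_x|lt_x] := leqP (rad e) (dist e u x).
  by exists x; rewrite ?inE ?eqxx.
by exists y; rewrite ?inE ?eqxx ?orbT //; lia.
Qed.

End Radius.

Theorem proposition10 (T : finType) (e : rel T) :
  simple_graph e -> connected_graph e ->
  2 * rad e - 1 <= diam e ->
  forall x y : T, dist e x y = diam e ->
    min_radius_certificate e [set x; y] /\ rad e = (dist e x y + 1) %/ 2.
Proof.
move=> [e_sym _] _ far_diam x y dxy_diam; rewrite -dxy_diam in far_diam.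
have card_gt0 : 0 < #|T| by apply/card_gt0P; exists x.
have dxy_le := dist_leq_double_rad e_sym x y.
split; last by lia.
split=> [|L certL]; first exact: far_pair_radius_certificate.
rewrite cards2; have [_|neq_xy] := eqVneq x y.
  exact: radius_certificate_card_gt0 card_gt0 certL.
exact: radius_certificate_card_gt1 (rad_gt0 e_sym neq_xy) certL.
Qed.
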